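(* For the 0-1-loss $\ell_{0\text{-}1}(\mathrm{h},(x,y))=1-\mathrm{h}(y|x)$ (score $L(\mathrm{q},y)=1-\mathrm{q}(y)$) and $\mathbf{a},\mathbf{b}\in\mathbb{R}^m$, the problem $\mathscr{P}_{\ell_{0\text{-}1}}^{\mathbf{a},\mathbf{b}}$ is equivalent to $$\mathscr{P}_{0\text{-}1}^{\mathbf{a},\mathbf{b}}:\ \min_{\boldsymbol{\mu},\boldsymbol{\eta},\nu}\ \tfrac{1}{2}(\mathbf{b}-\mathbf{a})^{\mathrm{T}}\boldsymbol{\eta}-\tfrac{1}{2}(\mathbf{b}+\mathbf{a})^{\mathrm{T}}\boldsymbol{\mu}-\nu\ \text{ s.t. }\sum_{y\in\mathcal{Y}}(\Phi(x,y)^{\mathrm{T}}\boldsymbol{\mu}+\nu+1)_+\leq 1\ \forall x\in\mathcal{X},\ \boldsymbol{\eta}+\boldsymbol{\mu}\succeq\mathbf{0},\ \boldsymbol{\eta}-\boldsymbol{\mu}\succeq\mathbf{0}.$$ In addition, for a solution $\boldsymbol{\mu}^*,\boldsymbol{\eta}^*,\nu^*$ of $\mathscr{P}_{0\text{-}1}^{\mathbf{a},\mathbf{b}}$, the condition $\ell_{0\text{-}1}(\mathrm{h},(x,y))+\Phi(x,y)^{\mathrm{T}}\boldsymbol{\mu}^*+\nu^*\leq 0$ for all $x,y$ (which makes $\mathrm{h}$ a 0-1-MRC for $\mathcal{U}^{\mathbf{a},\mathbf{b}}$) becomes $$\mathrm{h}(y|x)\geq \Phi(x,y)^{\mathrm{T}}\boldsymbol{\mu}^*+\nu^*+1\quad\forall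 x\in\mathcal{X},y\in\mathcal{Y}.$$
   Context: Let $\mathcal{X},\mathcal{Y}$ be finite nonempty sets, $\mathcal{Y}=\{1,\dots,|\mathcal{Y}|\}$; $\Delta(\mathcal{Y})$ is the set of probability distributions on $\mathcal{Y}$. A classification rule $\mathrm{h}$ assigns to each $x$ a distribution $\mathrm{h}(\cdot|x)\in\Delta(\mathcal{Y})$. For a score function $L$ with loss $\ell(\mathrm{h},(x,y))=L(\mathrm{h}(\cdot|x),y)$: $\Phi:\mathcal{X}\times\mathcal{Y}\to\mathbb{R}^m$ is a feature mapping, $\boldsymbol{\Phi}(x,\cdot)$ is the $|\mathcal{Y}|\times m$ matrix with rows $\Phi(x,y)^{\mathrm{T}}$, $\mathbf{1}$ the all-ones vector, $\preceq,\succeq$ componentwise, $\mathcal{L}=\{\mathbf{c}\in\mathbb{R}^{|\mathcal{Y}|}:\exists\,\mathrm{q}\in\Delta(\mathcal{Y}),\ \mathbf{c}+(L(\mathrm{q},y))_y\preceq\mathbf{0}\}$, and $\mathscr{P}_{\ell}^{\mathbf{a},\mathbf{b}}$ is $\min_{\boldsymbol{\mu},\boldsymbol{\eta},\nu}\tfrac12(\mathbf{b}-\mathbf{a})^{\mathrm{T}}\boldsymbol{\eta}-\tfrac12(\mathbf{b}+\mathbf{a})^{\mathrm{T}}\boldsymbol{\mu}-\nu$ s.t. $\boldsymbol{\Phi}(x,\cdot)\boldsymbol{\mu}+\nu\mathbf{1}\in\mathcal{L}$ $\forall x$, $\boldsymbol{\eta}\pm\boldsymbol{\mu}\succeq\mathbf{0}$.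 $\mathcal{U}^{\mathbf{a},\mathbf{b}}=\{\mathrm{p}\in\Delta(\mathcal{X}\times\mathcal{Y}):\mathbf{a}\preceq\mathbb{E}_{\mathrm{p}}\{\Phi\}\preceq\mathbf{b}\}$; an $\ell$-MRC for $\mathcal{U}$ minimizes $\max_{\mathrm{p}\in\mathcal{U}}\sum_{x,y}\mathrm{p}(x,y)\ell(\mathrm{h},(x,y))$ over all classification rules. $(t)_+=\max(t,0)$. *)

From mathcomp Require Import all_boot all_order all_algebra.
Set Implicit Arguments. Unset Strict Implicit. Unset Printing Implicit Defensive.
Import Order.TTheory GRing.Theory Num.Theory.
Local Open Scope ring_scope.

Section Defs.
Variables (R : realFieldType) (X Y : finType) (m : nat).

Definition dotv (u v : 'I_m -> R) : R := \sum_(i < m) u i * v i.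

Definition is_distr (q : Y -> R) : Prop :=
  (forall y, 0 <= q y) /\ \sum_(y : Y) q y = 1.

(* classification rule: h y x = h(y|x), each h(.|x) in Delta(Y) *)
Definition is_rule (h : Y -> X -> R) : Prop := forall x, is_distr (fun y => h y x).

Definition Lset (L : (Y -> R) -> Y -> R) (c : Y -> R) : Prop :=
  exists q, is_distr q /\ forall y, c y + L q y <= 0.

Definition L01 (q : Y -> R) (y : Y) : R := 1 - q y.
Definition loss01 (h : Y -> X -> R) (x : X) (y : Y) : R := L01 (fun y' => h y' x) y.

Definition objective (a b mu eta : 'I_m -> R) (nu : R) : R :=
  2^-1 * dotv (fun i => b i - a i) eta - 2^-1 * dotv (fun i => b i + a i) mu - nu.

Definition feasP (L : (Y -> R) -> Y -> R) (Phi : X -> Y -> 'I_m -> R)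
  (mu eta : 'I_m -> R) (nu : R) : Prop :=
  (forall x, Lset L (fun y => dotv (Phi x y) mu + nu)) /\
  (forall i, 0 <= eta i + mu i) /\ (forall i, 0 <= eta i - mu i).

Definition feasP01 (Phi : X -> Y -> 'I_m -> R)
  (mu eta : 'I_m -> R) (nu : R) : Prop :=
  (forall x, \sum_(y : Y) Num.max 0 (dotv (Phi x y) mu + nu + 1) <= 1) /\
  (forall i, 0 <= eta i + mu i) /\ (forall i, 0 <= eta i - mu i).

Definition is_solution (feas : ('I_m -> R) -> ('I_m -> R) -> R -> Prop)
  (a b mu eta : 'I_m -> R) (nu : R) : Prop :=
  feas mu eta nu /\
  forall mu' eta' nu', feas mu' eta' nu' ->
    objective a b mu eta nu <= objective a b mu' eta' nu'.

End Defs.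

(** A vector [c] lies in the set [L] of the 0-1 score iff some distribution
    [q] dominates [c + 1], i.e. dominates [(c + 1)_+].  Such a [q] exists iff
    [sum_y (c y + 1)_+ <= 1]: the remaining mass [1 - sum_y (c y + 1)_+] can be
    spread uniformly over the nonempty label set.  Hence both problems have
    the same feasible set and objective, so the same solutions; the MRC
    condition is a rewriting of [loss01 = 1 - h]. *)

From mathcomp Require Import all_boot all_order all_algebra.
From mathcomp Require Import lra.
Set Implicit Arguments. Unset Strict Implicit. Unset Printing Implicit Defensive.
Import Order.TTheory GRing.Theory Num.Theory.
Local Open Scope ring_scope.

Section ZeroOneScore.
Variables (R : realFieldType) (Y : finType).
Implicit Types (c : Y -> R).

Lemma Lset_L01_sum_le1 c :
  Lset (@L01 R Y) c -> \sum_(y : Y) Num.max 0 (c y + 1) <= 1.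
Proof.
case=> q [[q_ge0 q_sum1] c_le]; rewrite -q_sum1; apply: ler_sum => y _.
by rewrite ge_max q_ge0 /=; have := c_le y; rewrite /L01; lra.
Qed.

Lemma sum_le1_Lset_L01 c :
  (0 < #|Y|)%N -> \sum_(y : Y) Num.max 0 (c y + 1) <= 1 -> Lset (@L01 R Y) c.
Proof.
move=> Y_gt0; set s := \sum_(y : Y) _ => s_le1.
have nY_neq0 : (#|Y|%:R : R) != 0 by rewrite pnatr_eq0 -lt0n.
set slack := (1 - s) / #|Y|%:R.
have slack_ge0 : 0 <= slack by rewrite divr_ge0 ?ler0n // subr_ge0.
exists (fun y => Num.max 0 (c y + 1) + slack); split; first split.
- by move=> y; rewrite addr_ge0 // le_max lexx.
- rewrite big_split /= sumr_const (eq_card (B := Y)) // -/s.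
  by rewrite -mulr_natr mulfVK //; lra.
- move=> y; have : c y + 1 <= Num.max 0 (c y + 1) by rewrite le_max lexx orbT.
  rewrite /L01; lra.
Qed.

End ZeroOneScore.

Lemma feasP_L01P (R : realFieldType) (X Y : finType) (m : nat)
    (Phi : X -> Y -> 'I_m -> R) mu eta nu :
  (0 < #|Y|)%N -> feasP (@L01 R Y) Phi mu eta nu <-> feasP01 Phi mu eta nu.
Proof.
move=> Y_gt0; split=> -[L_feas eta_bounds]; split=> // x.
- exact: Lset_L01_sum_le1.
- exact: sum_le1_Lset_L01.
Qed.

Lemma is_solution_ext (R : realFieldType) (m : nat)
    (feas feas' : ('I_m -> R) -> ('I_m -> R) -> R -> Prop) a b mu eta nu :
  (forall mu eta nu, feas mu eta nu <-> feas' mu eta nu) ->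
  is_solution feas a b mu eta nu <-> is_solution feas' a b mu eta nu.
Proof.
move=> feasE; split=> -[/feasE feas_opt opt].
- by split=> // mu' eta' nu' /feasE; exact: opt.
- by split=> // mu' eta' nu' /feasE; exact: opt.
Qed.

Lemma loss01_add_le0 (R : realFieldType) (X Y : finType)
    (h : Y -> X -> R) x y (s : R) :
  loss01 h x y + s <= 0 <-> s + 1 <= h y x.
Proof. by rewrite /loss01 /L01; split=> ?; lra. Qed.

Theorem corollary4 (R : realFieldType) (X Y : finType) (m : nat)
  (Phi : X -> Y -> 'I_m -> R) (a b : 'I_m -> R) :
  (0 < #|X|)%N -> (0 < #|Y|)%N ->
  (* same objective; same feasible set *)
  (forall mu eta nu,
     feasP (@L01 R Y) Phi mu eta nu <-> feasP01 Phi mu eta nu) /\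
  (* hence same solutions *)
  (forall mu eta nu,
     is_solution (feasP (@L01 R Y) Phi) a b mu eta nu <->
     is_solution (feasP01 Phi) a b mu eta nu) /\
  (* MRC condition for a solution of P_{0-1} *)
  (forall mu eta nu, is_solution (feasP01 Phi) a b mu eta nu ->
     forall h : Y -> X -> R, is_rule h ->
       (forall x y, loss01 h x y + dotv (Phi x y) mu + nu <= 0) <->
       (forall x y, h y x >= dotv (Phi x y) mu + nu + 1)).
Proof.
move=> _ Y_gt0.
have feasE := fun mu eta nu => feasP_L01P Phi mu eta nu Y_gt0.
split=> //; split; first by move=> mu eta nu; exact: is_solution_ext.
(* The equivalence is pointwise. *)
move=> mu eta nu _ h _.
split=> le x y.
- by apply/loss01_add_le0; rewrite addrA.
- by rewrite -addrA; apply/loss01_add_le0.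
Qed.
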